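(* Let $X=\{a,b\}$ and consider the following commutative Frobenius objects in $\mathbf{Rel}$ on $X$: (1) $\eta=\varepsilon=\{a\}$, $\tilde\mu(a,a)=\{a\}$, $\tilde\mu(a,b)=\tilde\mu(b,a)=\{b\}$, $\tilde\mu(b,b)=\{a\}$; (2) $\eta=\varepsilon=\{a\}$, same as (1) except $\tilde\mu(b,b)=\{a,b\}$; (3) $\eta=\{a\}$, $\varepsilon=\{b\}$, $\tilde\mu(a,a)=\{a\}$, $\tilde\mu(a,b)=\tilde\mu(b,a)=\{b\}$, $\tilde\mu(b,b)=\{a\}$; (4) $\eta=\{a\}$, $\varepsilon=\{b\}$, same as (3) except $\tilde\mu(b,b)=\emptyset$; (5) $\eta=\varepsilon=\{a,b\}$, $\tilde\mu(a,a)=\{a\}$, $\tilde\mu(b,b)=\{b\}$, $\tilde\mu(a,b)=\tilde\mu(b,a)=\emptyset$. Then, for integers $g\ge 0$, their partition functions are: for (1), (2), (5), $Z(\Sigma_g)=T$ for all $g$; for (3), $Z(\Sigma_g)=T$ if and only if $g$ is odd; for (4), $Z(\Sigma_g)=T$ if and only if $g=1$.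
   Context: $\mathbf{Rel}$ is the symmetric monoidal category of sets and relations ($S\circ R=\{(x,z):\exists y,(x,y)\in R,(y,z)\in S\}$, identities are diagonals, product is Cartesian product, unit $\{\bullet\}$). A relation $R\subseteq X\times Y$ is identified with $\tilde R:X\to\mathcal{P}(Y)$. A Frobenius object in $\mathbf{Rel}$ is a set $X$ with unit $\eta\subseteq X$ (relation $\{\bullet\}\to X$), counit $\varepsilon\subseteq X$ (relation $X\to\{\bullet\}$) and multiplication $\mu$ (relation $X\times X\to X$, with map $\tilde\mu$) satisfying unitality, associativity, and nondegeneracy: there is a (unique) relation $\beta:\{\bullet\}\to X\times X$ with $(\varepsilon\times\mathbf{1})\circ(\mu\times\mathbf{1})\circ(\mathbf{1}\times\beta)=(\mathbf{1}\times\varepsilon)\circ(\mathbf{1}\times\mu)\circ(\beta\times\mathbf{1})=\mathbf{1}$. The comultiplication is $\delta=(\mathbf{1}\times\mu)\circ(\beta\times\mathbf{1})$. Commutative means $\tilde\mu(x,y)=\tilde\mu(y,x)$. The partition function on the closed orientable surface of genus $g$ is $Z(\Sigma_g)=\varepsilon\circ(\mu\circ\delta)^g\circ\eta\in\{\emptyset,\{\bullet\}\}$, with $\emptyset$ read as $F$ and $\{\bullet\}$ as $T$. *)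

(* The one-point set {•} is [unit]; the monoidal product is the Cartesian
   product [A * B], with the structural isomorphisms of Rel made explicit. *)

Definition rel (A B : Type) := A -> B -> Prop.

Definition comp {A B C : Type} (S : rel B C) (R : rel A B) : rel A C :=
  fun x z => exists y, R x y /\ S y z.

Definition idr (A : Type) : rel A A := fun x y => x = y.

Definition tens {A B C D : Type} (R : rel A B) (S : rel C D) : rel (A * C) (B * D) :=
  fun p q => R (fst p) (fst q) /\ S (snd p) (snd q).

Definition rel_eq {A B : Type} (R S : rel A B) : Prop :=
  forall x y, R x y <-> S x y.

Definition graph {A B : Type} (f : A -> B) : rel A B := fun x y => f x = y.

Definition lunit (A : Type) : rel (unit * A) A := graph (@snd unit A).
Definition lunit_inv (A : Type) : rel A (unit * A) := graph (fun x => (tt, x)).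
Definition runit (A : Type) : rel (A * unit) A := graph (@fst A unit).
Definition runit_inv (A : Type) : rel A (A * unit) := graph (fun x => (x, tt)).
Definition assoc (A B C : Type) : rel ((A * B) * C) (A * (B * C)) :=
  graph (fun p => (fst (fst p), (snd (fst p), snd p))).
Definition assoc_inv (A B C : Type) : rel (A * (B * C)) ((A * B) * C) :=
  graph (fun p => ((fst p, fst (snd p)), snd (snd p))).

Record FrobData (X : Type) := mkFrob {
  eta : rel unit X;
  eps : rel X unit;
  mu  : rel (X * X) X }.
Arguments eta {X}. Arguments eps {X}. Arguments mu {X}.

Section Frob.
Variable X : Type.
Variable F : FrobData X.

Definition unital : Prop :=
  rel_eq (comp (mu F) (comp (tens (eta F) (idr X)) (lunit_inv X))) (idr X) /\
  rel_eq (comp (mu F) (comp (tens (idr X) (eta F)) (runit_inv X))) (idr X).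

Definition associative : Prop :=
  rel_eq (comp (mu F) (tens (mu F) (idr X)))
         (comp (mu F) (comp (tens (idr X) (mu F)) (assoc X X X))).

Definition nondeg (beta : rel unit (X * X)) : Prop :=
  rel_eq
    (comp (lunit X) (comp (tens (eps F) (idr X)) (comp (tens (mu F) (idr X))
       (comp (assoc_inv X X X) (comp (tens (idr X) beta) (runit_inv X))))))
    (idr X) /\
  rel_eq
    (comp (runit X) (comp (tens (idr X) (eps F)) (comp (tens (idr X) (mu F))
       (comp (assoc X X X) (comp (tens beta (idr X)) (lunit_inv X))))))
    (idr X).

Definition is_frobenius : Prop :=
  unital /\ associative /\ exists beta, nondeg beta.

Definition commutative : Prop :=
  forall x y z, mu F (x, y) z <-> mu F (y, x) z.

Definition delta (beta : rel unit (X * X)) : rel X (X * X) :=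
  comp (tens (idr X) (mu F)) (comp (assoc X X X) (comp (tens beta (idr X)) (lunit_inv X))).

(* Z(Σ_g) = ε ∘ (μ ∘ δ)^g ∘ η : a relation {•} -> {•};
   it is T iff it contains (•,•). *)
Definition Zrel (beta : rel unit (X * X)) (g : nat) : rel unit unit :=
  comp (eps F) (comp (Nat.iter g (comp (comp (mu F) (delta beta))) (idr X)) (eta F)).

Definition Z (beta : rel unit (X * X)) (g : nat) : Prop := Zrel beta g tt tt.

End Frob.
Arguments unital {X}. Arguments associative {X}. Arguments nondeg {X}.
Arguments is_frobenius {X}. Arguments commutative {X}. Arguments delta {X}.
Arguments Zrel {X}. Arguments Z {X}.

Inductive AB : Type := a | b.

Definition sa : AB -> Prop := fun x => x = a.
Definition sb : AB -> Prop := fun x => x = b.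
Definition sab : AB -> Prop := fun _ => True.
Definition s0 : AB -> Prop := fun _ => False.

Definition unit_rel (S : AB -> Prop) : rel unit AB := fun _ x => S x.
Definition counit_rel (S : AB -> Prop) : rel AB unit := fun x _ => S x.
Definition mul_rel (maa mab mba mbb : AB -> Prop) : rel (AB * AB) AB :=
  fun p z => match p with
             | (a, a) => maa z | (a, b) => mab z
             | (b, a) => mba z | (b, b) => mbb z end.

Definition F1 : FrobData AB := mkFrob AB (unit_rel sa) (counit_rel sa) (mul_rel sa sb sb sa).
Definition F2 : FrobData AB := mkFrob AB (unit_rel sa) (counit_rel sa) (mul_rel sa sb sb sab).
Definition F3 : FrobData AB := mkFrob AB (unit_rel sa) (counit_rel sb) (mul_rel sa sb sb sa).
Definition F4 : FrobData AB := mkFrob AB (unit_rel sa) (counit_rel sb) (mul_rel sa sb sb s0).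
Definition F5 : FrobData AB := mkFrob AB (unit_rel sab) (counit_rel sab) (mul_rel sa s0 s0 sb).

(* F is a commutative Frobenius object and, for the (unique) β witnessing
   nondegeneracy, Z(Σ_g) = T iff P g *)
Definition partition_fn_is {X : Type} (F : FrobData X) (P : nat -> Prop) : Prop :=
  is_frobenius F /\ commutative F /\
  forall beta, nondeg F beta -> forall g : nat, Z F beta g <-> P g.

From Stdlib Require Import Arith.

(* In Rel the copairing β witnessing nondegeneracy is unique (the usual snake
   argument, done elementwise), so Z(Σ_g) only depends on the handle operator
   H = μ ∘ δ, which relates x to every element of p·(q·x) with (p, q) ∈ β; and
   Z(Σ_g) = T iff some point of η reaches a point of ε in g steps of H.
   For (1), (2), (5) H contains the identity and η meets ε. For (3) H is the
   transposition a ↔ b while η = {a}, ε = {b}. For (4) H relates a to b only. *)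

Section Frobenius.
Variables (X : Type) (F : FrobData X).

Definition frob_form (x y : X) : Prop := exists w, mu F (x, y) w /\ eps F w tt.

Lemma snake_l_iff beta x z :
  comp (lunit X) (comp (tens (eps F) (idr X)) (comp (tens (mu F) (idr X))
    (comp (assoc_inv X X X) (comp (tens (idr X) beta) (runit_inv X))))) x z <->
  exists u, frob_form x u /\ beta tt (u, z).
Proof.
  split.
  - intros ([[] ?] & ([w ?] & ([[? u] ?] & ([? [? ?]] & ([? []] & Hx & ? & Hb)
      & Hassoc) & Hmu & ?) & Hw & ?) & ?).
    cbv [runit_inv assoc_inv lunit graph idr] in *; simpl in *.
    injection Hx; injection Hassoc; intros; subst.
    exists u; split; [exists w; split|]; assumption.
  - intros (u & (w & Hmu & Hw) & Hb).
    exists (tt, z); split; [|reflexivity].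
    exists (w, z); split; [|split; [exact Hw | reflexivity]].
    exists ((x, u), z); split; [|split; [exact Hmu | reflexivity]].
    exists (x, (u, z)); split; [|reflexivity].
    exists (x, tt); split; [reflexivity | split; [reflexivity | exact Hb]].
Qed.

Lemma snake_r_iff beta x z :
  comp (runit X) (comp (tens (idr X) (eps F)) (comp (tens (idr X) (mu F))
    (comp (assoc X X X) (comp (tens beta (idr X)) (lunit_inv X))))) x z <->
  exists u, beta tt (z, u) /\ frob_form u x.
Proof.
  split.
  - intros ([? []] & ([? w] & ([? [u ?]] & ([[? ?] ?] & ([[] ?] & Hx & Hb & ?)
      & Hassoc) & ? & Hmu) & ? & Hw) & ?).
    cbv [lunit_inv runit assoc graph idr] in *; simpl in *.
    injection Hx; injection Hassoc; intros; subst.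
    exists u; split; [|exists w; split]; assumption.
  - intros (u & Hb & w & Hmu & Hw).
    exists (z, tt); split; [|reflexivity].
    exists (z, w); split; [|split; [reflexivity | exact Hw]].
    exists (z, (u, x)); split; [|split; [reflexivity | exact Hmu]].
    exists ((z, u), x); split; [|reflexivity].
    exists (tt, x); split; [reflexivity | split; [exact Hb | reflexivity]].
Qed.

Lemma nondegE beta : nondeg F beta <->
  (forall x z, (exists u, frob_form x u /\ beta tt (u, z)) <-> x = z) /\
  (forall x z, (exists u, beta tt (z, u) /\ frob_form u x) <-> x = z).
Proof.
  unfold nondeg, rel_eq.
  split; intros [Hl Hr]; split; intros x z.
  - rewrite <- snake_l_iff; apply Hl.
  - rewrite <- snake_r_iff; apply Hr.
  - rewrite snake_l_iff; apply Hl.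
  - rewrite snake_r_iff; apply Hr.
Qed.

Lemma nondeg_unique beta beta' p :
  nondeg F beta -> nondeg F beta' -> beta tt p -> beta' tt p.
Proof.
  destruct p as [x y]; rewrite !nondegE; intros [Hl _] [_ Hr'] Hxy.
  destruct (proj2 (Hr' x x) eq_refl) as (u & Hxu & Hux).
  replace y with u; [exact Hxu|].
  apply Hl; exists x; split; assumption.
Qed.

Definition handle (beta : rel unit (X * X)) : rel X X := comp (mu F) (delta F beta).

Lemma handleE beta x y : handle beta x y <->
  exists p q w, beta tt (p, q) /\ mu F (q, x) w /\ mu F (p, w) y.
Proof.
  split.
  - intros ([p w] & ([? [q ?]] & ([[? ?] ?] & ([[] ?] & Hx & Hb & ?) & Hassoc)
      & ? & Hw) & Hy).
    cbv [lunit_inv runit assoc graph idr] in *; simpl in *.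
    injection Hx; injection Hassoc; intros; subst.
    exists p, q, w; auto.
  - intros (p & q & w & Hb & Hw & Hy).
    exists (p, w); split; [|exact Hy].
    exists (p, (q, x)); split; [|split; [reflexivity | exact Hw]].
    exists ((p, q), x); split; [|reflexivity].
    exists (tt, x); split; [reflexivity | split; [exact Hb | reflexivity]].
Qed.

Lemma handle_mono (beta beta' : rel unit (X * X)) x y :
  (forall p, beta tt p -> beta' tt p) -> handle beta x y -> handle beta' x y.
Proof. rewrite !handleE; intros Hbeta (p & q & w & Hb & Hw & Hy); exists p, q, w; auto. Qed.

Definition iter_rel (h : rel X X) (g : nat) : rel X X := Nat.iter g (comp h) (idr X).

Lemma iter_rel_mono (h h' : rel X X) g x y :
  (forall x y, h x y -> h' x y) -> iter_rel h g x y -> iter_rel h' g x y.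
Proof.
  intros Hh; revert y; induction g as [|g IH]; [easy|].
  intros y (m & Hxm & Hmy); exists m; auto.
Qed.

Lemma iter_rel_refl (h : rel X X) g x : (forall x, h x x) -> iter_rel h g x x.
Proof. intros Hh; induction g as [|g IH]; [reflexivity | exists x; auto]. Qed.

Lemma iter_rel_graph (f : X -> X) g x y : iter_rel (graph f) g x y <-> Nat.iter g f x = y.
Proof.
  revert y; induction g as [|g IH]; intros y; [reflexivity|].
  split.
  - intros (m & Hxm & <-); apply IH in Hxm; simpl; congruence.
  - intros <-; exists (Nat.iter g f x); split; [apply IH|]; reflexivity.
Qed.

Lemma iter_rel_single x0 y0 g : x0 <> y0 ->
  iter_rel (fun x y => x = x0 /\ y = y0) g x0 y0 <-> g = 1.
Proof.
  intros Hneq; split.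
  - destruct g as [|[|g]]; [easy | easy |].
    intros (m & (m' & _ & _ & Hm) & Hm' & _); congruence.
  - intros ->; exists x0; split; [reflexivity | split; reflexivity].
Qed.

Definition Z_of (h : rel X X) (g : nat) : Prop :=
  exists x y, eta F tt x /\ iter_rel h g x y /\ eps F y tt.

Lemma ZE beta g : Z F beta g <-> Z_of (handle beta) g.
Proof. cbv [Z Zrel Z_of comp]; firstorder. Qed.

Lemma Z_of_mono (h h' : rel X X) g :
  (forall x y, h x y -> h' x y) -> Z_of h g -> Z_of h' g.
Proof. intros Hh (x & y & Hx & Hxy & Hy); exists x, y; eauto using iter_rel_mono. Qed.

Lemma Z_of_refl (h : rel X X) g :
  (forall x, h x x) -> (exists x, eta F tt x /\ eps F x tt) -> Z_of h g.
Proof. intros Hh (x & Hx & Hx'); exists x, x; auto using iter_rel_refl. Qed.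

Lemma Z_of_points x0 y0 (h : rel X X) g :
  (forall x, eta F tt x <-> x = x0) -> (forall y, eps F y tt <-> y = y0) ->
  Z_of h g <-> iter_rel h g x0 y0.
Proof.
  intros Heta Heps; split.
  - intros (x & y & Hx & Hxy & Hy); apply Heta in Hx; apply Heps in Hy; subst; exact Hxy.
  - intros Hxy; exists x0, y0; rewrite Heta, Heps; auto.
Qed.

Lemma partition_fn_is_of_handle beta0 (h : rel X X) (P : nat -> Prop) :
  unital F -> associative F -> commutative F -> nondeg F beta0 ->
  (forall x y, handle beta0 x y <-> h x y) ->
  (forall g, Z_of h g <-> P g) -> partition_fn_is F P.
Proof.
  intros Hu Ha Hc Hb0 Hh HP.
  split; [exact (conj Hu (conj Ha (ex_intro _ beta0 Hb0))) | split; [exact Hc |]].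
  intros beta Hb g; rewrite ZE, <- HP.
  split; apply Z_of_mono; intros x y Hxy.
  - apply Hh; revert Hxy; apply handle_mono; intro; apply nondeg_unique; assumption.
  - apply Hh in Hxy; revert Hxy; apply handle_mono; intro; apply nondeg_unique; assumption.
Qed.

Lemma partition_fn_is_true beta0 :
  unital F -> associative F -> commutative F -> nondeg F beta0 ->
  (forall x, handle beta0 x x) -> (exists x, eta F tt x /\ eps F x tt) ->
  partition_fn_is F (fun _ => True).
Proof.
  intros Hu Ha Hc Hb0 Hrefl Hx.
  apply (partition_fn_is_of_handle beta0 (handle beta0)); try easy.
  intros g; split; [easy | intros _; apply Z_of_refl; assumption].
Qed.

End Frobenius.

Definition swap_ab (x : AB) : AB := match x with a => b | b => a end.
Definition beta_diag : rel unit (AB * AB) := fun _ p => snd p = fst p.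
Definition beta_swap : rel unit (AB * AB) := fun _ p => snd p = swap_ab (fst p).

Lemma iter_swap_ab g : Nat.iter g swap_ab a = if Nat.odd g then b else a.
Proof.
  induction g as [|g IH]; [reflexivity|].
  simpl Nat.iter; rewrite IH, Nat.odd_succ, <- Nat.negb_odd.
  destruct (Nat.odd g); reflexivity.
Qed.

Lemma ex_pair {A B : Type} (P : A * B -> Prop) : (exists x y, P (x, y)) -> exists p, P p.
Proof. intros (x & y & H); eauto. Qed.

Ltac destruct_hyps :=
  repeat match goal with
  | H : exists _, _ |- _ => destruct H
  | H : _ /\ _ |- _ => destruct H
  | H : True |- _ => clear H
  | H : False |- _ => contradiction
  | p : prod _ _ |- _ => destruct p; cbn [fst snd] in *
  | u : unit |- _ => destruct u
  | x : AB |- _ => destruct x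
  | H : ?x = ?x |- _ => clear H
  | H : ?x = ?x -> _ |- _ => specialize (H eq_refl)
  | H : _ = _ |- _ => discriminate H
  | H : (_, _) = (_, _) |- _ => injection H; clear H; intros
  end.

Ltac finite_search :=
  destruct_hyps;
  lazymatch goal with
  | |- True => exact I
  | |- ?x = ?x => reflexivity
  | |- _ /\ _ => split; finite_search
  | |- _ <-> _ => split; intro; finite_search
  | |- forall _, _ => intro; finite_search
  | |- @ex (prod _ _) _ => apply ex_pair; cbn [fst snd]; finite_search
  | |- @ex unit _ => exists tt; finite_search
  | |- @ex AB _ => first [exists a; finite_search | exists b; finite_search]
  | _ => assumption
  end.

Ltac finite_check :=
  cbv [comp idr tens rel_eq graph lunit lunit_inv runit runit_inv assoc assoc_inv
       eta eps mu F1 F2 F3 F4 F5 mul_rel sa sb sab s0 unit_rel counit_rel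
       unital associative commutative frob_form beta_diag beta_swap swap_ab] in *;
  cbn [fst snd] in *;
  finite_search.

Ltac frobenius_check :=
  [> finite_check | finite_check | finite_check | apply nondegE; finite_check | ..].

Lemma partition_fn_F1 : partition_fn_is F1 (fun _ => True).
Proof.
  apply (partition_fn_is_true _ _ beta_diag); frobenius_check;
    [intros x; rewrite handleE | exists a]; finite_check.
Qed.

Lemma partition_fn_F2 : partition_fn_is F2 (fun _ => True).
Proof.
  apply (partition_fn_is_true _ _ beta_diag); frobenius_check;
    [intros x; rewrite handleE | exists a]; finite_check.
Qed.

Lemma partition_fn_F5 : partition_fn_is F5 (fun _ => True).
Proof.
  apply (partition_fn_is_true _ _ beta_diag); frobenius_check;
    [intros x; rewrite handleE | exists a]; finite_check.
Qed.

Lemma partition_fn_F3 : partition_fn_is F3 (fun g => Nat.odd g = true).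
Proof.
  apply (partition_fn_is_of_handle _ _ beta_swap (graph swap_ab)); frobenius_check.
  - intros x y; rewrite handleE; finite_check.
  - intros g; rewrite (Z_of_points _ _ a b); [|reflexivity..].
    rewrite iter_rel_graph, iter_swap_ab.
    destruct (Nat.odd g); split; congruence.
Qed.

Lemma partition_fn_F4 : partition_fn_is F4 (fun g => g = 1).
Proof.
  apply (partition_fn_is_of_handle _ _ beta_swap (fun x y => x = a /\ y = b));
    frobenius_check.
  - intros x y; rewrite handleE; finite_check.
  - intros g; rewrite (Z_of_points _ _ a b); [|reflexivity..].
    apply iter_rel_single; discriminate.
Qed.

Theorem mainTheorem5 :
  partition_fn_is F1 (fun _ => True) /\
  partition_fn_is F2 (fun _ => True) /\
  partition_fn_is F3 (fun g => Nat.odd g = true) /\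
  partition_fn_is F4 (fun g => g = 1) /\
  partition_fn_is F5 (fun _ => True).
Proof.
  exact (conj partition_fn_F1 (conj partition_fn_F2 (conj partition_fn_F3
    (conj partition_fn_F4 partition_fn_F5)))).
Qed.
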